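(* Let $\mathcal{X},\mathcal{Y}$ be finite sets, $p(Y|X)$ a channel from $\mathcal{X}$ to $\mathcal{Y}$, and $p(X)$ a fully supported distribution on $\mathcal{X}$ such that $p(y)=\sum_x p(y|x)p(x)$ is uniform on $\mathcal{Y}$; let $p(x,y)=p(x)p(y|x)$. Then for bijections $\sigma$ of $\mathcal{X}$ and $\tau$ of $\mathcal{Y}$, $(\sigma,\tau)$ belongs to the equivariance group $G_{p(Y|X)}$ if and only if $(x,y)\sim(\sigma(x),\tau(y))$ for all $(x,y)\in\mathcal{X}\times\mathcal{Y}$.
   Context: $G_{p(Y|X)}$ is the set of pairs of bijections $(\sigma,\tau)$ with $p(Y|X)\circ\sigma=\tau\circ p(Y|X)$ as channels, i.e. $p(y|\sigma(x))=p(\tau^{-1}(y)|x)$ for all $x,y$. The relation $(x,y)\sim(x',y')$ holds iff $\frac{p(x,y)}{p(x)p(y)}=\frac{p(x',y')}{p(x')p(y')}$. *)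

From mathcomp Require Import all_boot all_order all_algebra all_fingroup.
Set Implicit Arguments. Unset Strict Implicit. Unset Printing Implicit Defensive.
Import Order.TTheory GRing.Theory Num.Theory.
Local Open Scope ring_scope.

Section Defs.
Variables (R : realFieldType) (X Y : finType).

(* A channel p(Y|X): W x y = p(y|x), a stochastic matrix. *)
Definition is_channel (W : X -> Y -> R) : Prop :=
  (forall x y, 0 <= W x y) /\ (forall x, \sum_(y : Y) W x y = 1).

Definition full_support_dist (px : X -> R) : Prop :=
  (forall x, 0 < px x) /\ \sum_(x : X) px x = 1.

Definition out_marg (W : X -> Y -> R) (px : X -> R) (y : Y) : R :=
  \sum_(x : X) W x y * px x.

Definition joint (W : X -> Y -> R) (px : X -> R) (x : X) (y : Y) : R :=
  px x * W x y.

Definition uniform_on_Y (py : Y -> R) : Prop :=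
  forall y, py y = (#|Y|%:R)^-1.

Definition pmi_ratio (W : X -> Y -> R) (px : X -> R) (x : X) (y : Y) : R :=
  joint W px x y / (px x * out_marg W px y).

Definition sim_rel (W : X -> Y -> R) (px : X -> R) (x : X) (y : Y) (x' : X) (y' : Y)
  : Prop := pmi_ratio W px x y = pmi_ratio W px x' y'.

Definition in_equiv_group (W : X -> Y -> R) (sigma : {perm X}) (tau : {perm Y}) : Prop :=
  forall x y, W (sigma x) y = W x ((tau^-1)%g y).
End Defs.

From mathcomp Require Import all_boot all_order all_algebra all_fingroup.
Set Implicit Arguments. Unset Strict Implicit. Unset Printing Implicit Defensive.
Import Order.TTheory GRing.Theory Num.Theory.
Local Open Scope ring_scope.

(* When p(y) is uniform, p(x,y)/(p(x)p(y)) = |Y| p(y|x), so ~ is equality of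
   channel entries; and the defining identity p(y|σx) = p(τ⁻¹y|x) of the
   equivariance group, read at τy instead of y, says p(τy|σx) = p(y|x).
   Neither step uses that the channel is stochastic. *)

Section EquivarianceGroup.
Variables (R : realFieldType) (X Y : finType) (W : X -> Y -> R).

Lemma in_equiv_groupP (sigma : {perm X}) (tau : {perm Y}) :
  in_equiv_group W sigma tau <-> forall x y, W (sigma x) (tau y) = W x y.
Proof.
split=> eqW x y; first by rewrite eqW permK.
by rewrite -{1}(permKV tau y) eqW.
Qed.

Variable px : X -> R.
Hypotheses (px_neq0 : forall x, px x != 0)
           (unif : uniform_on_Y (out_marg W px)).

Lemma pmi_ratio_uniform x y : pmi_ratio W px x y = W x y * #|Y|%:R.
Proof.
by rewrite /pmi_ratio /joint unif invfM invrK mulrACA mulfV // mul1r.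
Qed.

Lemma sim_rel_uniform x y x' y' : sim_rel W px x y x' y' <-> W x y = W x' y'.
Proof.
rewrite /sim_rel !pmi_ratio_uniform.
have card_neq0 : (#|Y|%:R : R) != 0.
  by rewrite pnatr_eq0 -lt0n; apply/card_gt0P; exists y.
by split=> [/(mulIf card_neq0) | ->].
Qed.

End EquivarianceGroup.

Theorem proposition16 (R : realFieldType) (X Y : finType)
    (W : X -> Y -> R) (px : X -> R) :
  is_channel W ->
  full_support_dist px ->
  uniform_on_Y (out_marg W px) ->
  forall (sigma : {perm X}) (tau : {perm Y}),
    in_equiv_group W sigma tau <->
    (forall x y, sim_rel W px x y (sigma x) (tau y)).
Proof.
move=> _ [px_gt0 _] unif sigma tau.
have px_neq0 x : px x != 0 by rewrite gt_eqF.
have sim_relE := sim_rel_uniform px_neq0 unif.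
split=> [/in_equiv_groupP eqW x y | sim_eqW].
  by apply/sim_relE; rewrite eqW.
by apply/in_equiv_groupP=> x y; apply/esym/sim_relE.
Qed.
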